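(* Let $T$ be a complete first-order theory in a countable language with an uncountable atomic model. (1) If $\theta(\mathbf z;\mathbf x)$ is extendible, then for any countable atomic model $M$ and any $\mathbf b\in M^{\lg(\mathbf z)}$, $\mathbf a\in M^{\lg(\mathbf x)}$ with $M\models\theta(\mathbf b,\mathbf a)$, there is $M_0\preceq M$ such that $\mathbf b\subseteq M_0$ and $\mathbf a\subseteq M\setminus M_0$. (2) If $\theta(\mathbf z;\mathbf x)$ is extendible and $\mathbf z'\subseteq\mathbf z$, $\mathbf x'\subseteq\mathbf x$, then the restriction $\theta\restriction_{\mathbf z';\mathbf x'}$ is extendible. (3) A complete formula $\theta(\mathbf z;\mathbf x)$ is extendible if and only if $\theta\restriction_{\mathbf z,x_i}$ is not pseudo-algebraic for every variable $x_i$ in $\mathbf x$.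
   Context: A complete formula is one isolating a complete type over $\emptyset$ (realized in an atomic set). For a complete formula $\theta(\mathbf w)$ and a subsequence $\mathbf v$ of $\mathbf w$, $\theta\restriction_{\mathbf v}$ denotes the complete formula equivalent to $\exists\mathbf u\,\theta(\mathbf v,\mathbf u)$, where $\mathbf u$ are the remaining variables. A complete formula $\theta(\mathbf z;\mathbf x)$ with the displayed partition of its free variables is extendible if there are countable atomic models $M\preceq N$ and tuples $\mathbf b\subseteq M$, $\mathbf a\subseteq N\setminus M$ (every coordinate of $\mathbf a$ outside $M$) with $N\models\theta(\mathbf b,\mathbf a)$. A complete formula $\phi(x,\mathbf a)$ in one variable $x$ is pseudo-algebraic if for some/any countable atomic $M$ containing $\mathbf a$ and any atomic $N\succeq M$ with $N\neq M$, $\phi(N,\mathbf a)=\phi(M,\mathbf a)$; a complete formula $\theta(\mathbf z,x_i)$ is called pseudo-algebraic (as a formula in $x_i$) if $\theta(\mathbf b,x_i)$ is pseudo-algebraic for a (any) $\mathbf b$ realizing $\theta\restriction_{\mathbf z}$. *)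

From mathcomp Require Import all_boot.

Set Implicit Arguments.
Unset Strict Implicit.
Unset Printing Implicit Defensive.

Section FOL.

(* A countable language: countably many function symbols (constants are
   0-ary function symbols) and relation symbols. *)
Variables (F R : countType).

Inductive term : Type :=
| Var of nat
| App of F & seq term.

Inductive formula : Type :=
| Eq of term & term
| Rel of R & seq term
| Neg of formula
| And of formula & formula
| Ex of nat & formula.

Record structure : Type := Structure {
  carrier :> Type;
  elt0 : carrier;
  funS : F -> seq carrier -> carrier;
  relS : R -> seq carrier -> Prop }.

Definition upd (M : Type) (v : nat -> M) (i : nat) (x : M) : nat -> M :=
  fun j => if j == i then x else v j.

Fixpoint eval (M : structure) (v : nat -> M) (t : term) : M :=
  match t with
  | Var i => v i
  | App f ts => funS f (map (eval v) ts)
  end.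

Fixpoint sat (M : structure) (v : nat -> M) (phi : formula) : Prop :=
  match phi with
  | Eq t1 t2 => eval v t1 = eval v t2
  | Rel r ts => relS r (map (eval v) ts)
  | Neg psi => ~ sat v psi
  | And psi chi => sat v psi /\ sat v chi
  | Ex i psi => exists x : M, sat (upd v i x) psi
  end.

Fixpoint tfree (i : nat) (t : term) : bool :=
  match t with
  | Var j => j == i
  | App _ ts => has (tfree i) ts
  end.

Fixpoint ffree (i : nat) (phi : formula) : bool :=
  match phi with
  | Eq t1 t2 => tfree i t1 || tfree i t2
  | Rel _ ts => has (tfree i) ts
  | Neg psi => ffree i psi
  | And psi chi => ffree i psi || ffree i chi
  | Ex j psi => (j != i) && ffree i psi
  end.

Definition closed_in (n : nat) (phi : formula) : Prop :=
  forall i, ffree i phi -> i < n.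

Definition sentence (phi : formula) : Prop := closed_in 0 phi.

Fixpoint trename (rho : nat -> nat) (t : term) : term :=
  match t with
  | Var j => Var (rho j)
  | App f ts => App f (map (trename rho) ts)
  end.

Fixpoint frename (rho : nat -> nat) (phi : formula) : formula :=
  match phi with
  | Eq t1 t2 => Eq (trename rho t1) (trename rho t2)
  | Rel r ts => Rel r (map (trename rho) ts)
  | Neg psi => Neg (frename rho psi)
  | And psi chi => And (frename rho psi) (frename rho chi)
  | Ex j psi => Ex (rho j) (frename rho psi)
  end.

Definition asg (M : structure) (n : nat) (a : 'I_n -> M) : nat -> M :=
  fun i => if (insub i : option 'I_n) is Some j then a j else elt0 M.

Definition satT (M : structure) (n : nat) (phi : formula) (a : 'I_n -> M) :=
  sat (asg a) phi.

Definition catT (M : Type) (k m : nat) (b : 'I_k -> M) (a : 'I_m -> M)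
  : 'I_(k + m) -> M :=
  fun i => match split i with inl j => b j | inr j => a j end.

(* Restriction: given theta(x_0..x_(n-1)) and an index map s : 'I_p -> 'I_n,
   restrict s theta is the formula
     exists y_0 .. y_(n-1), (/\_j  y_(s j) = x_j) /\ theta(y_0, ..., y_(n-1)),
   i.e. (for s strictly increasing) exists u theta(v, u) with v = (x_(s j))_j.
   Bound variables y_i are x_(p+i). *)
Definition restrict (n p : nat) (s : 'I_p -> 'I_n) (theta : formula) : formula :=
  foldr Ex
    (foldr And (frename (addn p) theta)
       [seq Eq (Var (p + s j)) (Var j) | j <- enum 'I_p])
    (iota p n).

(* strictly increasing index maps = subsequences *)
Definition subseq_map (p n : nat) (s : 'I_p -> 'I_n) : Prop :=
  forall i j : 'I_p, i < j -> s i < s j.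

Definition cat_map (k k' m m' : nat) (s1 : 'I_k' -> 'I_k) (s2 : 'I_m' -> 'I_m)
  : 'I_(k' + m') -> 'I_(k + m) :=
  fun i => match split i with
           | inl j => lshift m (s1 j)
           | inr j => rshift k (s2 j)
           end.

Definition zxi_map (k m : nat) (i : 'I_m) : 'I_(k + 1) -> 'I_(k + m) :=
  fun j => match split j with
           | inl j' => lshift m j'
           | inr _ => rshift k i
           end.

Variable T : formula -> Prop.

Definition model (M : structure) : Prop :=
  forall phi, T phi -> forall v : nat -> M, sat v phi.

Definition complete_theory : Prop :=
  (forall phi, T phi -> sentence phi) /\
  (exists M : structure, model M) /\
  (forall phi, sentence phi ->
     (forall (M : structure) (v : nat -> M), model M -> sat v phi) \/
     (forall (M : structure) (v : nat -> M), model M -> ~ sat v phi)).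

Definition countable (M : structure) : Prop :=
  exists f : M -> nat, injective f.

Definition complete_formula (n : nat) (phi : formula) : Prop :=
  closed_in n phi /\
  (exists (M : structure) (a : 'I_n -> M), model M /\ satT phi a) /\
  (forall psi, closed_in n psi ->
     (forall (M : structure) (a : 'I_n -> M), model M -> satT phi a -> satT psi a) \/
     (forall (M : structure) (a : 'I_n -> M), model M -> satT phi a -> ~ satT psi a)).

Definition atomic (M : structure) : Prop :=
  model M /\
  forall (n : nat) (a : 'I_n -> M),
    exists phi, complete_formula n phi /\ satT phi a.

(* h : M -> N is an elementary embedding (M is identified with an elementary
   substructure of N via h) *)
Definition elementary (M N : structure) (h : M -> N) : Prop :=
  forall (phi : formula) (v : nat -> M), sat v phi <-> sat (h \o v) phi.

(* theta(z;x), |z| = k, |x| = m, with z = x_0..x_(k-1), x = x_k..x_(k+m-1) *)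
Definition extendible (k m : nat) (theta : formula) : Prop :=
  exists (M N : structure) (h : M -> N),
    [/\ countable M, countable N, atomic M, atomic N & elementary h] /\
    exists (b : 'I_k -> M) (a : 'I_m -> N),
      (forall (j : 'I_m) (y : M), h y <> a j) /\
      satT theta (catT (h \o b) a).

(* theta(z, x), |z| = k, x a single variable (index k), is pseudo-algebraic
   in x: for (any) b realizing theta|z, theta(b, x) is pseudo-algebraic,
   i.e. for any countable atomic M containing b and any atomic N properly
   extending M, theta(N, b) = theta(M, b). *)
Definition pseudo_algebraic (k : nat) (theta : formula) : Prop :=
  forall (M : structure), countable M -> atomic M ->
  forall b : 'I_k -> M,
    (exists c : 'I_1 -> M, satT theta (catT b c)) ->
  forall (N : structure) (h : M -> N),
    atomic N -> elementary h -> (exists y : N, forall x : M, h x <> y) ->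
    forall c : 'I_1 -> N,
      satT theta (catT (h \o b) c) <->
      exists c0 : 'I_1 -> M, h \o c0 = c /\ satT theta (catT b c0).

End FOL.

(* Countable atomic models are prime: if a countable atomic N and a model M realize
   the same complete formula by tuples c and d, an enumeration of N can be carried into
   M one element at a time, each new element keeping the type complete (this is where
   atomicity of N is used), which yields an elementary embedding N -> M sending c to d.
   Applied to a witness M1 <= N1 of extendibility this gives (1): the image of M1 in M
   contains b and omits a. (2) holds because realizations of theta project onto
   realizations of its restrictions.
   For (3), a formula rho(z, x) in one free variable x is extendible iff it is not
   pseudo-algebraic: a counterexample to pseudo-algebraicity in an atomic N >= M is cut
   down to a countable one by downward Lowenheim-Skolem. Conversely, if every
   restriction theta|(z, x_i) is extendible, start from a realization (b, a) of theta
   in a countable atomic model and shrink the small model containing b coordinate by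
   coordinate: restrictions of complete formulas are complete, so (1) applied to
   theta|(z, x_i) yields an elementary submodel that still contains b but omits a_i. *)

From HB Require Import structures.
From mathcomp Require Import all_boot zify.
From Stdlib Require Import Classical ClassicalEpsilon FunctionalExtensionality ProofIrrelevance.

Set Implicit Arguments.
Unset Strict Implicit.
Unset Printing Implicit Defensive.

Arguments Var {F} _.
Arguments Eq {F R} _ _.
Arguments Rel {F R} _ _.
Arguments Neg {F R} _.
Arguments And {F R} _ _.
Arguments Ex {F R} _ _.

Section Countable.
Variables F R : countType.

Fixpoint tree_of_term (t : term F) : GenTree.tree (nat + F) :=
  match t with
  | Var i => GenTree.Leaf (inl i)
  | App f ts => GenTree.Node 0 (GenTree.Leaf (inr f) :: map tree_of_term ts)
  end.

Fixpoint term_of_tree (c : GenTree.tree (nat + F)) : term F :=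
  match c with
  | GenTree.Leaf (inl i) => Var i
  | GenTree.Node _ (GenTree.Leaf (inr f) :: cs) => App f (map term_of_tree cs)
  | _ => Var 0
  end.

Lemma tree_of_termK : cancel tree_of_term term_of_tree.
Proof.
rewrite /cancel; fix IH 1 => -[i|f ts] //=; congr App; rewrite -map_comp.
by elim: ts => //= t ts IHts; rewrite IH IHts.
Qed.

HB.instance Definition _ := Countable.copy (term F) (can_type tree_of_termK).

Local Notation leaf t := (GenTree.Leaf (inl (inl t))).

Definition term_of_leaf (c : GenTree.tree (term F + R + nat)) : term F :=
  if c is leaf t then t else Var 0.

Fixpoint tree_of_formula (phi : formula F R) : GenTree.tree (term F + R + nat) :=
  match phi with
  | Eq t1 t2 => GenTree.Node 0 [:: leaf t1; leaf t2]
  | Rel r ts => GenTree.Node 1 (GenTree.Leaf (inl (inr r)) :: [seq leaf t | t <- ts])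
  | Neg psi => GenTree.Node 2 [:: tree_of_formula psi]
  | And psi chi => GenTree.Node 3 [:: tree_of_formula psi; tree_of_formula chi]
  | Ex i psi => GenTree.Node 4 [:: GenTree.Leaf (inr i); tree_of_formula psi]
  end.

Fixpoint formula_of_tree (c : GenTree.tree (term F + R + nat)) : formula F R :=
  match c with
  | GenTree.Node 0 [:: c1; c2] => Eq (term_of_leaf c1) (term_of_leaf c2)
  | GenTree.Node 1 (GenTree.Leaf (inl (inr r)) :: cs) => Rel r (map term_of_leaf cs)
  | GenTree.Node 2 [:: c] => Neg (formula_of_tree c)
  | GenTree.Node 3 [:: c1; c2] => And (formula_of_tree c1) (formula_of_tree c2)
  | GenTree.Node 4 [:: GenTree.Leaf (inr i); c] => Ex i (formula_of_tree c)
  | _ => Eq (Var 0) (Var 0)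
  end.

Lemma tree_of_formulaK : cancel tree_of_formula formula_of_tree.
Proof.
elim=> [t1 t2|r ts|p IH|p IHp q IHq|i p IH] /=; rewrite ?IH ?IHp ?IHq //.
by congr Rel; rewrite -map_comp; elim: ts => //= t ts ->.
Qed.

HB.instance Definition _ := Countable.copy (formula F R) (can_type tree_of_formulaK).

End Countable.

Section Semantics.
Variables F R : countType.
Local Notation term := (term F).
Local Notation formula := (formula F R).
Local Notation structure := (structure F R).

Lemma term_ind_in (P : term -> Prop) :
  (forall i, P (Var i)) ->
  (forall f ts, (forall t, t \in ts -> P t) -> P (App f ts)) ->
  forall t, P t.
Proof.
move=> HV HA; fix IH 1 => -[i|f ts]; first exact: HV.
apply: HA; elim: ts => [|t ts IHts] u Hu; first by exfalso; rewrite in_nil in Hu.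
by case/predU1P: Hu => [->|]; [exact: IH|exact: IHts].
Qed.

Lemma eval_ext (M : structure) (v w : nat -> M) t :
  (forall i, tfree i t -> v i = w i) -> eval v t = eval w t.
Proof.
elim/term_ind_in: t => [i|f ts IH] /= Hvw; first by apply: Hvw; rewrite /= eqxx.
congr (funS _ _); apply/eq_in_map => t Ht; apply: IH => // i Hi.
by apply: Hvw; apply/hasP; exists t.
Qed.

Lemma sat_ext (M : structure) (v w : nat -> M) phi :
  (forall i, ffree i phi -> v i = w i) -> sat v phi <-> sat w phi.
Proof.
elim: phi v w => [t1 t2|r ts|psi IH|psi IHpsi chi IHchi|j psi IH] v w Hvw /=.
- by rewrite !(@eval_ext _ v w) // => i Hi; apply: Hvw; rewrite /= Hi ?orbT.
- suff -> : map (eval v) ts = map (eval w) ts by [].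
  apply/eq_in_map => t Ht; apply: eval_ext => i Hi.
  by apply: Hvw; apply/hasP; exists t.
- by rewrite (IH v w).
- by rewrite (IHpsi v w) ?(IHchi v w) // => i Hi; apply: Hvw; rewrite /= Hi ?orbT.
- have Hupd x i : ffree i psi -> upd v j x i = upd w j x i.
    rewrite /upd; case: ifP => // /negbT Hij Hi.
    by apply: Hvw; rewrite /= eq_sym Hij.
  by split=> -[x Hx]; exists x; apply/(IH _ _ (Hupd x)).
Qed.

Lemma asgE (M : structure) n (a : 'I_n -> M) (j : 'I_n) : asg a j = a j.
Proof. by rewrite /asg valK. Qed.

Lemma asg_lt (M : structure) n (a : 'I_n -> M) i (Hi : i < n) :
  asg a i = a (Ordinal Hi).
Proof. by rewrite -asgE. Qed.

Lemma sat_satT (M : structure) n phi (v : nat -> M) :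
  closed_in n phi -> sat v phi <-> satT phi (fun j : 'I_n => v j).
Proof. by move=> Hc; apply: sat_ext => i /Hc Hi; rewrite asg_lt. Qed.

Lemma eval_rename (M : structure) (v : nat -> M) rho t :
  eval v (trename rho t) = eval (v \o rho) t.
Proof.
elim/term_ind_in: t => [i|f ts IH] //=.
by congr (funS _ _); rewrite -map_comp; apply/eq_in_map => t /IH.
Qed.

Lemma sat_rename (M : structure) rho phi (v : nat -> M) :
  injective rho -> sat v (frename rho phi) <-> sat (v \o rho) phi.
Proof.
move=> rho_inj; elim: phi v => [t1 t2|r ts|psi IH|psi IHpsi chi IHchi|j psi IH] v /=.
- by rewrite !eval_rename.
- by rewrite -map_comp; under eq_map do rewrite /= eval_rename.
- by rewrite IH.
- by rewrite IHpsi IHchi.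
- have Hupd x : upd v (rho j) x \o rho = upd (v \o rho) j x.
    by apply: functional_extensionality => i; rewrite /upd /= (inj_eq rho_inj).
  by split=> -[x Hx]; exists x; move: Hx; rewrite IH Hupd.
Qed.

Lemma tfree_rename rho (t : term) i :
  tfree i (trename rho t) -> exists2 j, i = rho j & tfree j t.
Proof.
elim/term_ind_in: t => [k|f ts IH] /=; first by move/eqP <-; exists k.
rewrite has_map => /hasP [t Ht /IH [] // j -> Hj].
by exists j => //; apply/hasP; exists t.
Qed.

Lemma ffree_rename rho (phi : formula) i :
  injective rho -> ffree i (frename rho phi) -> exists2 j, i = rho j & ffree j phi.
Proof.
move=> rho_inj; elim: phi i => [t1 t2|r ts|psi IH|psi IHpsi chi IHchi|j psi IH] i /=.
- by case/orP => /tfree_rename [j -> Hj]; exists j; rewrite ?Hj ?orbT.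
- rewrite has_map => /hasP [t Ht /tfree_rename [j -> Hj]].
  by exists j => //; apply/hasP; exists t.
- exact: IH.
- by case/orP => [/IHpsi|/IHchi] [j -> Hj]; exists j; rewrite ?Hj ?orbT.
- case/andP => Hne /IH [j' Ei Hj']; exists j' => //.
  by rewrite Hj' andbT; apply: contraNneq Hne => ->; rewrite Ei.
Qed.

Lemma has_bound (A : eqType) (P : nat -> A -> bool) (s : seq A) :
  (forall a, a \in s -> exists n, forall i, P i a -> i < n) ->
  exists n, forall i, has (P i) s -> i < n.
Proof.
elim: s => [|a s IHs] Hs; first by exists 0.
have [n1 H1] := Hs a (mem_head a s).
have [|n2 H2] := IHs; first by move=> b Hb; apply: Hs; rewrite in_cons Hb orbT.
by exists (maxn n1 n2) => i /orP [/H1|/H2] Hi; lia.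
Qed.

Lemma tfree_bound (t : term) : exists n, forall i, tfree i t -> i < n.
Proof.
elim/term_ind_in: t => [j|f ts IH]; first by exists j.+1 => i /eqP <-.
exact: has_bound.
Qed.

Lemma closed_in_exists (phi : formula) : exists n, closed_in n phi.
Proof.
rewrite /closed_in; elim: phi => [t1 t2|r ts|psi IH|psi [n1 H1] chi [n2 H2]|j psi [n H]] /=.
- have [n1 H1] := tfree_bound t1; have [n2 H2] := tfree_bound t2.
  by exists (maxn n1 n2) => i /orP [/H1|/H2] Hi; lia.
- by apply: has_bound => t _; apply: tfree_bound.
- exact: IH.
- by exists (maxn n1 n2) => i /orP [/H1|/H2] Hi; lia.
- by exists n => i /andP [_ /H].
Qed.


Lemma sat_exs (M : structure) p n (body : formula) (v : nat -> M) :
  sat v (foldr Ex body (iota p n)) <->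
  exists2 w : nat -> M, (forall i, (i < p) || (p + n <= i) -> w i = v i) & sat w body.
Proof.
elim: n p v => [|n IH] p v /=.
  split=> [Hv|[w Hw Hs]]; first by exists v.
  by have -> : v = w by apply: functional_extensionality => i; rewrite Hw //; lia.
split=> [[x /IH [w Hw Hs]]|[w Hw Hs]].
  exists w => // i Hi; rewrite Hw; last by lia.
  by rewrite /upd ifF //; apply/eqP; lia.
exists (w p); apply/IH; exists w => // i Hi; rewrite /upd.
by case: eqP => [->|Hip] //; apply: Hw; lia.
Qed.

Lemma ffree_exs p n (body : formula) i :
  ffree i (foldr Ex body (iota p n)) -> ffree i body /\ ((i < p) || (p + n <= i)).
Proof.
elim: n p => [|n IH] p /=; first by move=> ->; split=> //; lia.
by case/andP => /eqP Hne /IH [Hi Hpi]; split=> //; lia.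
Qed.

Lemma sat_ands (M : structure) (I : finType) (eqs : I -> formula) base (v : nat -> M) :
  sat v (foldr And base [seq eqs j | j <- enum I]) <->
  (forall j, sat v (eqs j)) /\ sat v base.
Proof.
suff sat_seq (s : seq I) : sat v (foldr And base (map eqs s)) <->
    (forall j, j \in s -> sat v (eqs j)) /\ sat v base.
  by rewrite sat_seq; split=> -[Heqs Hb]; split=> // j *; apply: Heqs; rewrite ?mem_enum.
elim: s => [|j s IH] /=; first by split=> [|[]].
rewrite IH; split=> [[Hj [Hs Hb]]|[Hs Hb]].
  by split=> // j'; rewrite in_cons => /predU1P [->|/Hs].
by split; [|split=> // j' Hj']; apply: Hs; rewrite in_cons ?eqxx ?Hj' ?orbT.
Qed.

Lemma ffree_ands (I : finType) (eqs : I -> formula) base i :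
  ffree i (foldr And base [seq eqs j | j <- enum I]) ->
  ffree i base \/ exists j, ffree i (eqs j).
Proof.
elim: (enum I) => [|j s IH] /=; first by left.
by case/orP => [Hj|/IH]; [right; exists j|].
Qed.

Definition exists_block p n (I : finType) (eqs : I -> formula) (th : formula) : formula :=
  foldr Ex (foldr And (frename (addn p) th) [seq eqs j | j <- enum I]) (iota p n).

Definition block_asg (M : structure) p n (v : nat -> M) (y : 'I_n -> M) : nat -> M :=
  fun i => if (p <= i) && (i < p + n) then asg y (i - p) else v i.

Lemma block_asg_in (M : structure) p n (v : nat -> M) (y : 'I_n -> M) (j : 'I_n) :
  block_asg p v y (p + j) = y j.
Proof. by rewrite /block_asg leq_addr ltn_add2l ltn_ord addKn asgE. Qed.

Lemma block_asg_out (M : structure) p n (v : nat -> M) (y : 'I_n -> M) i :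
  i < p -> block_asg p v y i = v i.
Proof. by move=> Hi; rewrite /block_asg ifF //; lia. Qed.

Lemma sat_exists_block (M : structure) p n (I : finType) (eqs : I -> formula) th
    (v : nat -> M) :
  closed_in n th ->
  sat v (exists_block p n eqs th) <->
  exists2 y : 'I_n -> M, (forall j, sat (block_asg p v y) (eqs j)) & satT th y.
Proof.
move=> Hth; rewrite sat_exs; split=> [[w Hw /sat_ands [Heqs Hs]]|[y Heqs Hs]].
  have Ew : block_asg p v (fun j : 'I_n => w (p + j)) = w.
    apply: functional_extensionality => i; rewrite /block_asg.
    case: ifP => [/andP [Hpi Hin]|/negbT Hi]; last by rewrite Hw //; lia.
    by rewrite (@asg_lt _ _ _ (i - p)) /= ?subnKC //; lia.
  exists (fun j : 'I_n => w (p + j)); first by rewrite Ew.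
  by move: Hs; rewrite sat_rename ?(sat_satT _ Hth) //; apply: addnI.
exists (block_asg p v y) => [i Hi|]; first by rewrite /block_asg ifF //; lia.
apply/sat_ands; split=> //; rewrite sat_rename ?(sat_satT _ Hth); last exact: addnI.
suff -> : (fun j : 'I_n => (block_asg p v y \o addn p) j) = y by [].
by apply: functional_extensionality => j; rewrite /= block_asg_in.
Qed.

Lemma closed_exists_block p n (I : finType) (eqs : I -> formula) (th : formula) :
  closed_in n th -> (forall j, closed_in (p + n) (eqs j)) ->
  closed_in p (exists_block p n eqs th).
Proof.
move=> Hth Heqs i /ffree_exs [Hfree Hi].
by case/ffree_ands: Hfree => [/(ffree_rename (@addnI p)) [j Ei /Hth]|[j /Heqs]]; lia.
Qed.

Lemma restrictE n p (s : 'I_p -> 'I_n) (th : formula) :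
  restrict s th = exists_block p n (fun j : 'I_p => Eq (Var (p + s j)) (Var j)) th.
Proof. by []. Qed.

Lemma sat_restrict (M : structure) n p (s : 'I_p -> 'I_n) th (v : nat -> M) :
  closed_in n th ->
  sat v (restrict s th) <-> exists2 y : 'I_n -> M, (forall j, y (s j) = v j) & satT th y.
Proof.
move=> Hth; rewrite restrictE sat_exists_block //.
by split=> -[y Hy Hs]; exists y => // j; move: (Hy j); rewrite /= block_asg_in block_asg_out.
Qed.

Lemma satT_restrict (M : structure) n p (s : 'I_p -> 'I_n) th (c : 'I_p -> M) :
  closed_in n th ->
  satT (restrict s th) c <-> exists2 y : 'I_n -> M, (forall j, y (s j) = c j) & satT th y.
Proof.
by move=> Hth; rewrite /satT sat_restrict //; split=> -[y Hy Hs]; exists y => // j;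
  move: (Hy j); rewrite asgE.
Qed.

Lemma closed_restrict n p (s : 'I_p -> 'I_n) (th : formula) :
  closed_in n th -> closed_in p (restrict s th).
Proof.
move=> Hth; apply: closed_exists_block => // j i /orP [] /eqP <-;
  have := ltn_ord j; have := ltn_ord (s j); lia.
Qed.

Definition subst_vars s n (g : 'I_n -> 'I_s) (th : formula) : formula :=
  exists_block s n (fun j : 'I_n => Eq (Var (s + j)) (Var (g j))) th.

Lemma sat_subst_vars (M : structure) s n (g : 'I_n -> 'I_s) th (v : nat -> M) :
  closed_in n th -> sat v (subst_vars g th) <-> satT th (fun j => v (g j)).
Proof.
move=> Hth; rewrite sat_exists_block //; split=> [[y Hy Hs]|Hs].
  suff <- : y = (fun j => v (g j)) by [].
  by apply: functional_extensionality => j; move: (Hy j); rewrite /= block_asg_in block_asg_out.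
by exists (fun j => v (g j)) => // j; rewrite /= block_asg_in block_asg_out.
Qed.

Lemma closed_subst_vars s n (g : 'I_n -> 'I_s) (th : formula) :
  closed_in n th -> closed_in s (subst_vars g th).
Proof.
move=> Hth; apply: closed_exists_block => // j i /orP [] /eqP <-;
  have := ltn_ord j; have := ltn_ord (g j); lia.
Qed.

End Semantics.

Section Tuples.
Variable P : Type.

Lemma catT_lshift k m (b : 'I_k -> P) (a : 'I_m -> P) j : catT b a (lshift m j) = b j.
Proof. by rewrite /catT (unsplitK (inl _ j)). Qed.

Lemma catT_rshift k m (b : 'I_k -> P) (a : 'I_m -> P) j : catT b a (rshift k j) = a j.
Proof. by rewrite /catT (unsplitK (inr _ j)). Qed.

Lemma catT_cat_map k m k' m' (s1 : 'I_k' -> 'I_k) (s2 : 'I_m' -> 'I_m)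
    (b : 'I_k -> P) (a : 'I_m -> P) j :
  catT b a (cat_map s1 s2 j) = catT (b \o s1) (a \o s2) j.
Proof.
by rewrite /cat_map /catT; case: (split j) => j'; rewrite ?(unsplitK (inl _ _)) ?(unsplitK (inr _ _)).
Qed.

Lemma catT_comp (Q : Type) (h : P -> Q) k m (b : 'I_k -> P) (a : 'I_m -> P) :
  h \o catT b a = catT (h \o b) (h \o a).
Proof. by apply: functional_extensionality => j; rewrite /catT /=; case: (split j). Qed.

Lemma catT_split k m (y : 'I_(k + m) -> P) : catT (y \o lshift m) (y \o @rshift k m) = y.
Proof.
apply: functional_extensionality => j; rewrite -[in RHS](splitK j) /catT.
by case: (split j).
Qed.

End Tuples.

Section Elementary.
Variables F R : countType.
Local Notation formula := (formula F R).
Local Notation structure := (structure F R).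

Lemma upd_asg_catT (M : structure) k (b : 'I_k -> M) x (j : 'I_(k + 1)) :
  upd (asg b) k x j = catT b (fun _ : 'I_1 => x) j.
Proof.
rewrite -(splitK j); case: (split j) => j' /=; rewrite ?catT_lshift ?catT_rshift /upd.
  by rewrite ifF ?asgE //; apply/negbTE; rewrite neq_ltn ltn_ord.
by rewrite ord1 addn0 eqxx.
Qed.

Lemma satT_Ex_last (M : structure) k (rho : formula) (b : 'I_k -> M) :
  closed_in (k + 1) rho ->
  satT (Ex k rho) b <-> exists x, satT rho (catT b (fun _ : 'I_1 => x)).
Proof.
move=> Hc.
have sat_upd x : sat (upd (asg b) k x) rho <-> satT rho (catT b (fun _ : 'I_1 => x)).
  rewrite (sat_satT _ Hc); suff -> : (fun j : 'I_(k + 1) => upd (asg b) k x j) =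
    catT b (fun _ : 'I_1 => x) by [].
  by apply: functional_extensionality => j; apply: upd_asg_catT.
by split=> -[x /sat_upd]; exists x.
Qed.

Lemma elementary_inj (M N : structure) (h : M -> N) : elementary h -> injective h.
Proof.
move=> Hh x y Hxy; pose v i := if i == 0 then x else y.
by apply/(Hh (Eq (Var 0) (Var 1)) v).
Qed.

Lemma elementary_comp (M N P : structure) (f : M -> N) (g : N -> P) :
  elementary f -> elementary g -> elementary (g \o f).
Proof. by move=> Hf Hg phi v; rewrite (Hf phi v) (Hg phi (f \o v)). Qed.

Lemma elementary_cancel (M N P : structure) (f : M -> N) (g : N -> P) :
  elementary g -> elementary (g \o f) -> elementary f.
Proof. by move=> Hg Hgf phi v; rewrite (Hgf phi v) (Hg phi (f \o v)). Qed.

Lemma elementary_satT (M N : structure) (h : M -> N) n (phi : formula) (a : 'I_n -> M) :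
  elementary h -> closed_in n phi -> satT phi a <-> satT phi (h \o a).
Proof.
by move=> Hh Hc; rewrite /satT Hh; apply: sat_ext => i /Hc Hi; rewrite /= !asg_lt.
Qed.

Variable T : formula -> Prop.

Lemma atomic_pull (M N : structure) (h : M -> N) :
  elementary h -> atomic T N -> atomic T M.
Proof.
move=> Hh [HN HNatomic]; split=> [phi Hphi v|n a]; first by apply/Hh; apply: HN.
have [phi [Hphi Ha]] := HNatomic n (h \o a); exists phi; split=> //.
by rewrite (elementary_satT _ Hh (proj1 Hphi)).
Qed.

End Elementary.

Section DownwardLowenheimSkolem.
Variables (F R : countType) (U : structure F R).
Local Notation formula := (formula F R).

Section Substructure.
Variable P : U -> Prop.
Hypothesis P_elt0 : P (elt0 U).
Hypothesis P_funS : forall f (xs : seq {x | P x}), P (funS f (map sval xs)).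

Definition substructure : structure F R :=
  @Structure F R {x | P x} (exist P _ P_elt0)
    (fun f xs => exist P _ (P_funS f xs)) (fun r xs => relS r (map sval xs)).

Definition substructure_incl : substructure -> U := @sval U P.

Lemma substructure_incl_inj : injective substructure_incl.
Proof. by move=> [x Hx] [y Hy] /= Exy; subst y; rewrite (proof_irrelevance _ Hx Hy). Qed.

Lemma eval_substructure_incl (v : nat -> substructure) t :
  substructure_incl (eval v t) = eval (substructure_incl \o v) t.
Proof.
elim/term_ind_in: t => [i|f ts IH] //=.
by congr (funS _ _); rewrite -map_comp; apply/eq_in_map => t /IH.
Qed.

Hypothesis P_witness : forall (phi : formula) i (v : nat -> substructure),
  (exists x, sat (upd (substructure_incl \o v) i x) phi) ->
  exists2 x, P x & sat (upd (substructure_incl \o v) i x) phi.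

Lemma tarski_vaught : elementary substructure_incl.
Proof.
move=> phi; elim: phi => [t1 t2|r ts|psi IH|psi IHpsi chi IHchi|i psi IH] v /=.
- rewrite -!eval_substructure_incl.
  by split=> [->|/substructure_incl_inj].
- suff -> : map sval (map (eval v) ts) = map (eval (substructure_incl \o v)) ts by [].
  by rewrite -map_comp; apply: eq_map => t; apply: eval_substructure_incl.
- by rewrite IH.
- by rewrite IHpsi IHchi.
- have incl_upd x : substructure_incl \o upd v i x = upd (substructure_incl \o v) i (sval x).
    by apply: functional_extensionality => j; rewrite /upd /=; case: eqP.
  split=> [[x]|/P_witness [x Px]]; first by rewrite IH incl_upd; exists (sval x).
  by exists (exist P x Px); rewrite IH incl_upd.
Qed.

End Substructure.

Arguments substructure_incl {P P_elt0 P_funS}.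

Definition witness (phi : formula) i (w : nat -> U) : U :=
  epsilon (inhabits (elt0 U)) (fun x => sat (upd w i x) phi).

Lemma witnessP (phi : formula) i (w : nat -> U) :
  (exists x, sat (upd w i x) phi) -> sat (upd w i (witness phi i w)) phi.
Proof. exact: epsilon_spec. Qed.

Variable S : nat -> U.

(* Codes for the Skolem hull of [S]: [Leaf (inl j)] is the seed [S j], a node headed
   by [inr (inl f)] applies [f] to its children, and one headed by [inr (inr (phi, i))]
   is a witness for [Ex i phi] with its children as parameters x_0, x_1, ...;
   ill-formed codes denote [elt0 U]. *)
Local Notation code := (GenTree.tree (nat + (F + formula * nat))).

Fixpoint decode (c : code) : U :=
  match c with
  | GenTree.Leaf (inl j) => S j
  | GenTree.Node _ (GenTree.Leaf (inr (inl f)) :: cs) => funS f (map decode cs)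
  | GenTree.Node _ (GenTree.Leaf (inr (inr (phi, i))) :: cs) =>
      witness phi i (nth (elt0 U) (map decode cs))
  | _ => elt0 U
  end.

Definition in_hull (x : U) : Prop := exists c, decode c = x.

Definition code_of (x : U) : code :=
  epsilon (inhabits (GenTree.Leaf (inl 0))) (fun c => decode c = x).

Lemma code_ofK x : in_hull x -> decode (code_of x) = x.
Proof. exact: epsilon_spec. Qed.

Lemma hull_elt0 : in_hull (elt0 U).
Proof. by exists (GenTree.Node 0 [::]). Qed.

Lemma decode_code_of_seq (xs : seq {x | in_hull x}) :
  map decode (map (code_of \o sval) xs) = map sval xs.
Proof. by rewrite -map_comp; apply/eq_map => -[x Hx]; rewrite /= code_ofK. Qed.

Lemma hull_funS f (xs : seq {x | in_hull x}) : in_hull (funS f (map sval xs)).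
Proof.
exists (GenTree.Node 0 (GenTree.Leaf (inr (inl f)) :: map (code_of \o sval) xs)).
by rewrite /= decode_code_of_seq.
Qed.

Local Notation hull := (substructure hull_elt0 hull_funS).

Lemma hull_witness (phi : formula) i (v : nat -> hull) :
  (exists x, sat (upd (substructure_incl \o v) i x) phi) ->
  exists2 x, in_hull x & sat (upd (substructure_incl \o v) i x) phi.
Proof.
have [N0 HN0] := closed_in_exists phi.
pose cs := [seq code_of (sval (v j)) | j <- iota 0 N0].
pose w := nth (elt0 U) (map decode cs).
have Hw j : j < N0 -> w j = sval (v j).
  move=> Hj; rewrite /w /cs -map_comp (nth_map 0) ?size_iota // nth_iota //=.
  by rewrite code_ofK //; case: (v j).
have agree x j : ffree j phi -> upd w i x j = upd (substructure_incl \o v) i x j.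
  by move=> /HN0 Hj; rewrite /upd; case: eqP => // _; rewrite Hw.
case=> x Hx; exists (witness phi i w).
  by exists (GenTree.Node 0 (GenTree.Leaf (inr (inr (phi, i))) :: cs)).
by apply/(sat_ext (agree _))/witnessP; exists x; apply/(sat_ext (agree _)).
Qed.

Lemma hull_countable : countable hull.
Proof.
exists (fun x => pickle (code_of (substructure_incl x))).
move=> x y /(pcan_inj pickleK)/(f_equal decode).
by rewrite !code_ofK; [apply: substructure_incl_inj|apply: svalP..].
Qed.

Theorem downward_LS :
  exists (M : structure F R) (g : M -> U) (s : nat -> M),
    [/\ countable M, elementary g & g \o s = S].
Proof.
have S_hull j : in_hull (S j) by exists (GenTree.Leaf (inl j)).
exists hull, substructure_incl, (fun j => exist _ _ (S_hull j)); split=> //.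
  exact: hull_countable.
exact: (tarski_vaught hull_witness).
Qed.

End DownwardLowenheimSkolem.

Section ChainLimit.
Variables (A : Type) (P : nat -> (nat -> A) -> Prop) (n : nat) (w0 : nat -> A).
Hypothesis P_local : forall t w w', (forall i, i < t -> w i = w' i) -> P t w -> P t w'.
Hypothesis P_start : P n w0.
Hypothesis P_step : forall t w, n <= t -> P t w -> exists z, P t.+1 (upd w t z).

Let extend t w := epsilon (inhabits (w0 0)) (fun z => P t.+1 (upd w t z)).

Fixpoint stage t : nat -> A :=
  if t is t'.+1 then
    if t' < n then stage t' else upd (stage t') t' (extend t' (stage t'))
  else w0.

Lemma stage_le t : t <= n -> stage t = w0.
Proof. by elim: t => //= t IH Ht; rewrite ifT ?IH //; apply: ltnW. Qed.

Lemma stage_stable t d i : i < t -> stage (t + d) i = stage t i.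
Proof.
move=> Hi; elim: d => [|d IH]; first by rewrite addn0.
by rewrite addnS /=; case: ifP => _ //; rewrite /upd ifF //; apply/eqP; lia.
Qed.

Lemma stageP t : n <= t -> P t (stage t).
Proof.
elim: t => [|t IH] Ht; first by move: P_start; have -> : n = 0 by lia.
case: (ltnP t n) => Htn; first by rewrite stage_le; [have <- : n = t.+1 by lia|lia].
rewrite /= ifF; last by apply/negbTE; rewrite -leqNgt.
exact: (epsilon_spec _ _ (P_step Htn (IH Htn))).
Qed.

Lemma chain_limit : exists W, (forall i, i < n -> W i = w0 i) /\ forall t, n <= t -> P t W.
Proof.
exists (fun i => stage i.+1 i); split=> [i Hi|t Ht]; first by rewrite stage_le.
by apply: P_local (stageP Ht) => i Hi; rewrite -{1}(subnKC Hi) stage_stable.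
Qed.

End ChainLimit.

Section CompleteFormulas.
Variables (F R : countType) (T : formula F R -> Prop).
Local Notation formula := (formula F R).
Local Notation structure := (structure F R).

Lemma complete_formula_transfer n (chi psi : formula) (M N : structure)
    (c : 'I_n -> M) (d : 'I_n -> N) :
  complete_formula T n chi -> model T M -> model T N -> satT chi c -> satT chi d ->
  closed_in n psi -> satT psi c -> satT psi d.
Proof.
move=> [_ [_ Hdec]] HM HN Hc Hd Hpsi Hpsic.
by case: (Hdec psi Hpsi) => H; [apply: H|case: (H M c)].
Qed.

Lemma complete_restrict n p (s : 'I_p -> 'I_n) (th : formula) :
  complete_formula T n th -> complete_formula T p (restrict s th).
Proof.
move=> [Hc [[M [a [HM Ha]]] Hdec]]; split; first exact: closed_restrict.
split; first by exists M, (a \o s); split=> //; apply/satT_restrict => //; exists a.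
move=> psi Hpsi; have Hpsi' := closed_subst_vars (g := s) Hpsi.
have sat_proj (N : structure) (y : 'I_n -> N) (c : 'I_p -> N) : (forall j, y (s j) = c j) ->
    satT (subst_vars s psi) y <-> satT psi c.
  move=> Hy; rewrite /satT sat_subst_vars //.
  by suff -> : (fun j => asg y (s j)) = c by []; apply: functional_extensionality => j;
    rewrite asgE Hy.
by case: (Hdec _ Hpsi') => H; [left|right] => N c HN /(satT_restrict _ _ Hc) [y Hy Hth];
  move/(H N y HN): Hth; rewrite (sat_proj _ _ _ Hy).
Qed.

Lemma complete_formula_realized n (th : formula) (M : structure) :
  complete_theory T -> complete_formula T n th -> model T M ->
  exists a : 'I_n -> M, satT th a.
Proof.
move=> [_ [_ Tdec]] [Hc [[M' [a' [HM' Ha']]] _]] HM.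
pose sig := foldr Ex th (iota 0 n).
have sig_sentence : sentence sig by move=> i /ffree_exs [/Hc Hi]; lia.
have : sat (fun _ => elt0 M) sig.
  case: (Tdec sig sig_sentence) => H; first exact: H.
  by case: (H M' (asg a') HM'); apply/sat_exs; exists (asg a').
by case/sat_exs=> w _ Hw; exists (fun j : 'I_n => w j); apply/(sat_satT w Hc).
Qed.

Definition same_type (M N : structure) t (u : nat -> M) (w : nat -> N) : Prop :=
  exists chi, [/\ complete_formula T t chi, satT chi (fun j : 'I_t => u j)
                & satT chi (fun j : 'I_t => w j)].

Lemma same_type_sym (M N : structure) t (u : nat -> M) (w : nat -> N) :
  same_type t u w -> same_type t w u.
Proof. by case=> chi [? ? ?]; exists chi. Qed.

Lemma same_type_subst (M N : structure) t (u : nat -> M) (w : nat -> N) n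
    (phi : formula) (g : 'I_n -> 'I_t) :
  model T M -> model T N -> same_type t u w -> closed_in n phi ->
  satT phi (fun j => u (g j)) -> satT phi (fun j => w (g j)).
Proof.
move=> HM HN [chi [Hchi Hu Hw]] Hc; have Hc' := closed_subst_vars (g := g) Hc.
move=> /(sat_subst_vars g u Hc)/(sat_satT u Hc') Hug.
apply/(sat_subst_vars g w Hc)/(sat_satT w Hc').
exact: complete_formula_transfer Hchi HM HN Hu Hw Hc' Hug.
Qed.

Lemma same_type_sat (M N : structure) n0 (u : nat -> M) (w : nat -> N) :
  model T M -> model T N -> (forall t, n0 <= t -> same_type t u w) ->
  forall phi (g : nat -> nat), sat (u \o g) phi <-> sat (w \o g) phi.
Proof.
move=> HM HN same phi g; have [N0 HN0] := closed_in_exists phi.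
pose t := n0 + (\max_(i < N0) g i).+1.
have g_lt (i : 'I_N0) : g i < t.
  by apply: ltn_addl; rewrite ltnS; apply: (@leq_bigmax _ (fun i : 'I_N0 => g i)).
pose g' i := Ordinal (g_lt i).
have same_t := same t (leq_addr _ _).
rewrite !(sat_satT _ HN0); split.
  exact: (same_type_subst (g := g') HM HN same_t HN0).
exact: (same_type_subst (g := g') HN HM (same_type_sym same_t) HN0).
Qed.

Lemma same_type_forth (M N : structure) t (u : nat -> M) (w : nat -> N) :
  atomic T M -> model T N -> same_type t u w -> exists z, same_type t.+1 u (upd w t z).
Proof.
move=> [HM HMatomic] HN [chi [Hchi Hu Hw]].
have [psi [Hpsi Hupsi]] := HMatomic t.+1 (fun j => u j).
have Hc := proj1 Hpsi.
have HcEx : closed_in t (Ex t psi) by move=> i /andP [/eqP Hne /Hc Hi]; lia.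
have : satT (Ex t psi) (fun j : 'I_t => w j).
  apply: (complete_formula_transfer Hchi HM HN Hu Hw HcEx).
  apply/(sat_satT u HcEx); exists (u t); apply/(sat_satT _ Hc).
  suff -> : (fun j : 'I_t.+1 => upd u t (u t) j) = (fun j => u j) by [].
  by apply: functional_extensionality => j; rewrite /upd; case: eqP => [->|].
by move=> /(sat_satT w HcEx) [z /(sat_satT _ Hc) Hz]; exists z, psi.
Qed.

Lemma countable_enum (M : structure) :
  countable M -> exists (E : nat -> M) (c : M -> nat), cancel c E.
Proof.
case=> c c_inj; exists (fun j => epsilon (inhabits (elt0 M)) (fun x => c x = j)), c.
by move=> x; apply: c_inj; apply: (epsilon_spec _ (fun y => c y = c x)); exists x.
Qed.

Theorem atomic_embedding n (th : formula) (M N : structure) (a : 'I_n -> M) (b : 'I_n -> N) :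
  complete_formula T n th -> countable M -> atomic T M -> model T N ->
  satT th a -> satT th b -> exists2 f : M -> N, elementary f & f \o a = b.
Proof.
move=> Hth cM aM HN Ha Hb; have [E [c cK]] := countable_enum cM.
pose u i := if i < n then asg a i else E (i - n).
have u_idx x : u (n + c x) = x by rewrite /u ltnNge leq_addr /= addKn cK.
have [W [W_start W_same]] : exists W : nat -> N,
    (forall i, i < n -> W i = asg b i) /\ forall t, n <= t -> same_type t u W.
  apply: chain_limit => [t w w' Hww' [chi [Hchi Hu Hw]]| |t w _]; last first.
  - exact: same_type_forth.
  - exists th; split=> //.
      by suff -> : (fun j : 'I_n => u j) = a by []; apply: functional_extensionality => j;
        rewrite /u ltn_ord asgE.
    by suff -> : (fun j : 'I_n => asg b j) = b by []; apply: functional_extensionality => j;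
      rewrite asgE.
  - exists chi; split=> //; suff <- : (fun j : 'I_t => w j) = (fun j => w' j) by [].
    by apply: functional_extensionality => j; rewrite Hww'.
have W_sat := same_type_sat (proj1 aM) HN W_same.
exists (W \o (fun x => n + c x)).
  move=> phi v; rewrite -[in X in X <-> _](_ : u \o (fun i => n + c (v i)) = v).
    exact: W_sat.
  by apply: functional_extensionality => i; rewrite /= u_idx.
apply: functional_extensionality => j /=.
have := (W_sat (Eq (Var 0) (Var 1)) (fun i => if i == 0 then nat_of_ord j else n + c (a j))).1.
by rewrite /= u_idx /u ltn_ord asgE W_start // asgE => ->.
Qed.

End CompleteFormulas.

Section Extendible.
Variables (F R : countType) (T : formula F R -> Prop).
Local Notation formula := (formula F R).
Local Notation structure := (structure F R).

Lemma satT_restrict_cat k m k' m' (s1 : 'I_k' -> 'I_k) (s2 : 'I_m' -> 'I_m)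
    (th : formula) (M : structure) (b : 'I_k -> M) (a : 'I_m -> M) :
  closed_in (k + m) th -> satT th (catT b a) ->
  satT (restrict (cat_map s1 s2) th) (catT (b \o s1) (a \o s2)).
Proof.
by move=> Hc Hs; apply/(satT_restrict _ _ Hc); exists (catT b a) => // j; rewrite catT_cat_map.
Qed.

Lemma extendible_omit k m (th : formula) :
  complete_formula T (k + m) th -> extendible T k m th ->
  forall M : structure, countable M -> atomic T M ->
  forall (b : 'I_k -> M) (a : 'I_m -> M), satT th (catT b a) ->
  exists (M0 : structure) (g : M0 -> M) (b0 : 'I_k -> M0),
    [/\ countable M0, atomic T M0, elementary g, g \o b0 = b & forall j y, g y <> a j].
Proof.
move=> Hth [M1 [N1 [h1 [[cM1 cN1 aM1 aN1 eh1] [b1 [a1 [a1_new Hs]]]]]]] M cM aM b a Hba.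
have [f ef Ef] := atomic_embedding Hth cN1 aN1 (proj1 aM) Hs Hba.
have Eb j : f (h1 (b1 j)) = b j.
  by have := congr1 (fun y => y (lshift m j)) Ef; rewrite /= !catT_lshift.
have Ea j : f (a1 j) = a j.
  by have := congr1 (fun y => y (rshift k j)) Ef; rewrite /= !catT_rshift.
exists M1, (f \o h1), b1; split=> //; first exact: elementary_comp.
  by apply: functional_extensionality => j; apply: Eb.
by move=> j y /= Hy; apply: (a1_new j y); apply: (elementary_inj ef); rewrite Hy Ea.
Qed.

Lemma extendible_restrict k m k' m' (s1 : 'I_k' -> 'I_k) (s2 : 'I_m' -> 'I_m) (th : formula) :
  closed_in (k + m) th -> extendible T k m th ->
  extendible T k' m' (restrict (cat_map s1 s2) th).
Proof.
move=> Hc [M [N [h [HMN [b [a [a_new Hs]]]]]]].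
exists M, N, h; split=> //; exists (b \o s1), (a \o s2); split=> [j y|]; first exact: a_new.
exact: (satT_restrict_cat s1 s2 Hc Hs).
Qed.

Lemma extendible1_not_pseudo_algebraic k (rho : formula) :
  closed_in (k + 1) rho -> extendible T k 1 rho -> ~ pseudo_algebraic T k rho.
Proof.
move=> Hc [M [N [h [[cM cN aM aN eh] [b [c [c_new Hs]]]]]]] PA.
have HcEx : closed_in k (Ex k rho) by move=> i /andP [/eqP Hne /Hc Hi]; lia.
have [x Hx] : exists x, satT rho (catT b (fun _ : 'I_1 => x)).
  apply/(satT_Ex_last _ Hc)/(elementary_satT _ eh HcEx)/(satT_Ex_last _ Hc).
  exists (c ord0); suff -> : (fun _ : 'I_1 => c ord0) = c by [].
  by apply: functional_extensionality => j; rewrite ord1.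
have [c0 [Ec0 _]] := (PA M cM aM b (ex_intro (fun c => satT rho (catT b c)) _ Hx) N h aN eh
  (ex_intro _ _ (c_new ord0)) c).1 Hs.
by apply: (c_new ord0 (c0 ord0)); rewrite -Ec0.
Qed.

Lemma not_pseudo_algebraic_extendible1 k (rho : formula) :
  closed_in (k + 1) rho -> ~ pseudo_algebraic T k rho -> extendible T k 1 rho.
Proof.
move=> Hc notPA; apply: NNPP => not_ext; apply: notPA.
move=> M cM aM b _ N h aN eh _ c; split; last first.
  by case=> c0 [<- Hc0]; rewrite -catT_comp -elementary_satT.
move=> Hs; case: (classic (exists z, h z = c ord0)) => [[z Hz]|c_new].
  exists (fun _ => z); split; first by apply: functional_extensionality => j; rewrite ord1.
  apply/(elementary_satT _ eh Hc); rewrite catT_comp.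
  suff -> : h \o (fun _ : 'I_1 => z) = c by [].
  by apply: functional_extensionality => j; rewrite ord1.
(* Cutting [N] down to a countable model containing [h M] and [c] witnesses
   extendibility. *)
case: not_ext; have [E [cd cdK]] := countable_enum cM.
have [N' [g [s [cN' eg Es]]]] :=
  downward_LS (fun j => if j is j'.+1 then h (E j') else c ord0).
pose h' x := s (cd x).+1.
have gh' : g \o h' = h.
  by apply: functional_extensionality => x; rewrite /= -[g _]/((g \o s) _) Es /= cdK.
have gc : g (s 0) = c ord0 by rewrite -[g _]/((g \o s) 0) Es.
exists M, N', h'; split.
  split=> //; first exact: atomic_pull eg aN.
  by apply: (elementary_cancel eg); rewrite gh'.
exists b, (fun _ => s 0); split.
  by move=> j y Hy; apply: c_new; exists y; rewrite -gh' /= Hy gc.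
apply/(elementary_satT _ eg Hc); rewrite catT_comp.
suff -> : catT (g \o (h' \o b)) (g \o (fun _ : 'I_1 => s 0)) = catT (h \o b) c by [].
apply: functional_extensionality => j; rewrite /catT; case: split => j' /=.
  by rewrite -gh'.
by rewrite ord1 gc.
Qed.

Definition extendible_below k m (th : formula) j : Prop :=
  exists (M N : structure) (h : M -> N) (b : 'I_k -> M) (a : 'I_m -> N),
    [/\ countable M, countable N, atomic T M, atomic T N & elementary h] /\
    satT th (catT (h \o b) a) /\ forall (i : 'I_m) y, i < j -> h y <> a i.

Lemma extendible_below0 k m (th : formula) :
  complete_theory T -> (exists U, atomic T U) -> complete_formula T (k + m) th ->
  extendible_below k m th 0.
Proof.
move=> HT [U aU] Hth.
have [M [g [_ [cM eg _]]]] := downward_LS (fun _ : nat => elt0 U).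
have aM := atomic_pull eg aU.
have [y Hy] := complete_formula_realized HT Hth (proj1 aM).
exists M, M, id, (y \o lshift m), (y \o @rshift k m); split; first by split.
split=> //; suff -> : catT (id \o (y \o lshift m)) (y \o @rshift k m) = y by [].
exact: catT_split.
Qed.

Lemma extendible_below_step k m (th : formula) j (Hj : j < m) :
  complete_formula T (k + m) th -> extendible T k 1 (restrict (@zxi_map k m (Ordinal Hj)) th) ->
  extendible_below k m th j -> extendible_below k m th j.+1.
Proof.
move=> Hth ext [M [N [h [b [a [[cM cN aM aN eh] [Hs a_new]]]]]]].
set i0 := Ordinal Hj.
have Ei0 (i : 'I_m) : i < j.+1 -> j <= i -> a i = a i0.
  by move=> Hi Hji; congr a; apply: val_inj => /=; lia.
case: (classic (exists e, h e = a i0)) => [[e He]|a_i0_new]; last first.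
  exists M, N, h, b, a; split=> //; split=> // i y Hi.
  case: (ltnP i j) => Hij; first exact: a_new.
  by rewrite Ei0 // => Hy; apply: a_i0_new; exists y.
pose rho := restrict (@zxi_map k m i0) th.
have rho_complete : complete_formula T (k + 1) rho by apply: complete_restrict.
have Hrho : satT rho (catT b (fun _ : 'I_1 => e)).
  apply/(elementary_satT _ eh (proj1 rho_complete)); rewrite catT_comp.
  suff -> : h \o (fun _ : 'I_1 => e) = a \o (fun _ : 'I_1 => i0).
    exact: (satT_restrict_cat id (fun _ : 'I_1 => i0) (proj1 Hth) Hs).
  by apply: functional_extensionality => jj; rewrite /= He.
have [M0 [g [b0 [cM0 aM0 eg Eb0 g_new]]]] := extendible_omit rho_complete ext cM aM Hrho.
exists M0, N, (h \o g), b0, a; split; first by split=> //; apply: elementary_comp.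
split; first by move: Hs; rewrite -Eb0.
move=> i y Hi /= Hy; case: (ltnP i j) => Hij; first exact: (a_new i (g y) Hij Hy).
by apply: (g_new ord0 y); apply: (elementary_inj eh); rewrite Hy He Ei0.
Qed.

Lemma extendible_of_coordinates k m (th : formula) :
  complete_theory T -> (exists U, atomic T U) -> complete_formula T (k + m) th ->
  (forall i : 'I_m, extendible T k 1 (restrict (@zxi_map k m i) th)) ->
  extendible T k m th.
Proof.
move=> HT HU Hth Hext.
have below j : j <= m -> extendible_below k m th j.
  elim: j => [|j IH] Hj; first exact: extendible_below0.
  exact: (extendible_below_step Hth (Hext (Ordinal Hj)) (IH (ltnW Hj))).
have [M [N [h [b [a [HMN [Hs a_new]]]]]]] := below m (leqnn m).
by exists M, N, h; split=> //; exists b, a; split=> // i y; apply: a_new.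
Qed.

End Extendible.

Theorem fact3p2p3 (F R : countType) (T : formula F R -> Prop) :
  complete_theory T ->
  (exists M : structure F R, atomic T M /\ ~ countable M) ->
  (* (1) *)
  (forall (k m : nat) (theta : formula F R),
     complete_formula T (k + m) theta -> extendible T k m theta ->
     forall (M : structure F R), countable M -> atomic T M ->
     forall (b : 'I_k -> M) (a : 'I_m -> M),
       satT theta (catT b a) ->
       exists (M0 : structure F R) (h : M0 -> M),
         elementary h /\
         (forall j : 'I_k, exists y : M0, h y = b j) /\
         (forall (j : 'I_m) (y : M0), h y <> a j)) /\
  (* (2) *)
  (forall (k m k' m' : nat) (theta : formula F R)
          (s1 : 'I_k' -> 'I_k) (s2 : 'I_m' -> 'I_m),
     complete_formula T (k + m) theta -> extendible T k m theta ->
     subseq_map s1 -> subseq_map s2 ->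
     extendible T k' m' (restrict (cat_map s1 s2) theta)) /\
  (* (3) *)
  (forall (k m : nat) (theta : formula F R),
     complete_formula T (k + m) theta ->
     (extendible T k m theta <->
      forall i : 'I_m,
        ~ pseudo_algebraic T k (restrict (@zxi_map k m i) theta))).
Proof.
move=> HT [U [aU _]]; have HU : exists U, atomic T U by exists U.
split.
  move=> k m th Hth ext M cM aM b a Hba.
  have [M0 [g [b0 [_ _ eg Eb0 g_new]]]] := extendible_omit Hth ext cM aM Hba.
  by exists M0, g; split=> //; split=> // j; exists (b0 j); rewrite -Eb0.
split.
  by move=> k m k' m' th s1 s2 Hth ext _ _; apply: extendible_restrict (proj1 Hth) ext.
move=> k m th Hth; have Hc i := closed_restrict (s := @zxi_map k m i) (proj1 Hth).
split=> [ext i|notPA].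
  apply: extendible1_not_pseudo_algebraic (Hc i) _.
  exact: (extendible_restrict id (fun _ : 'I_1 => i) (proj1 Hth) ext).
apply: extendible_of_coordinates => // i.
exact: not_pseudo_algebraic_extendible1 (Hc i) (notPA i).
Qed.
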